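(* For positive integers $b,n$ and nonnegative integers $c$ and $k\le n$, $$\Psi_n(k,1,b,c)=\Psi_{n-1}(k,c+1,b,c).$$
   Context: All constant terms are taken with $\operatorname{CT}_x=\operatorname{CT}_{x_n}\cdots\operatorname{CT}_{x_1}$ (iterated constant-term extraction), where $(1-x_i)^{-b}$ and $x_i/(1-x_i)$ are expanded as power series in $x_i$, and for $i<j$, $(x_j-x_i)^{-c}=x_j^{-c}(1-x_i/x_j)^{-c}$ is expanded as a power series in $x_i/x_j$. $$\Psi_n(k,a,b,c):=\operatorname{CT}_x[t^k]\prod_{i=1}^n(1-x_i)^{-b}x_i^{-a+1}\Big(1+t\frac{x_i}{1-x_i}\Big)\prod_{1\le i<j\le n}(x_j-x_i)^{-c},$$ with $[t^k]$ denoting the coefficient of $t^k$; for $n=0$ the empty product is $1$, so $\Psi_0(k,a,b,c)$ is $1$ if $k=0$ and $0$ otherwise. *)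

From mathcomp Require Import all_boot.
Set Implicit Arguments. Unset Strict Implicit. Unset Printing Implicit Defensive.

(* Iterated constant term
     Psi_n(k,a,b,c) = CT_{x_n} ... CT_{x_1} [t^k]
        prod_i (1-x_i)^{-b} x_i^{-a+1} (1 + t x_i/(1-x_i)) prod_{i<j} (x_j-x_i)^{-c}
   computed literally, one variable at a time (x_1 first).

   Expansions used:
     (x_j - x_i)^{-c} = x_j^{-c} sum_{m>=0} 'C(c+m-1,m) (x_i/x_j)^m,
     (1-x)^{-e}       = sum_{q>=0} 'C(e+q-1,q) x^q   (correct also for e = 0),
     [t^k] prod_i (1 + t x_i/(1-x_i)) : each variable contributes the factor
        1 (s_i = 0) or x_i (1-x_i)^{-1} (s_i = 1), with sum_i s_i = k.

   When CT_{x_i} is taken (variables x_1..x_{i-1} already eliminated), the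
   current expression is a finite sum of terms
       coeff * prod_{j>=i} x_j^{-C_j} * (factors of the variables x_i..x_n),
   where C_j collects the exponents m_{lj} (l < i) coming from the
   expansions of (x_j - x_l)^{-c} already used.  The x_i-dependent part is
       x_i^{-a+1-c(i-1)-C_i} x_i^{s} (1-x_i)^{-b-s} prod_{j>i} (1-x_i/x_j)^{-c} x_j^{-c}
   whose constant term in x_i is the sum over s, and over the exponents
   (m_{ij})_{j>i} with R := sum_j m_{ij} <= a - 1 + c(i-1) + C_i - s, of
       'C(b+s+q-1, q) * prod_j 'C(c+m_{ij}-1, m_{ij}),  q := a-1+c(i-1)+C_i-s-R,
   with the x_j^{-m_{ij}} added to C_j.  All coefficients are natural numbers. *)

Fixpoint sum_tuples (L B : nat) (f : seq nat -> nat) : nat :=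
  match L with
  | 0 => f [::]
  | L'.+1 => \sum_(0 <= m < B.+1) sum_tuples L' (B - m) (fun t => f (m :: t))
  end.

(* ct n b c a k i0 C : iterated constant term over the n remaining variables
   x_{i0+1}, ..., x_{i0+n}; C = their accumulated column exponents (size n);
   k = remaining required power of t. *)
Fixpoint ct (n : nat) (b c a k i0 : nat) (C : seq nat) : nat :=
  match n with
  | 0 => (k == 0)
  | n'.+1 =>
      let Ci := head 0 C in
      let rest := behead C in
      \sum_(0 <= s < 2)
        if (s <= k) && (s + 1 <= a + c * i0 + Ci) then
          let B := a + c * i0 + Ci - 1 - s in
          sum_tuples n' B (fun m =>
            'C(b + s + (B - sumn m) - 1, B - sumn m)
            * \prod_(mj <- m) 'C(c + mj - 1, mj)
            * ct n' b c a (k - s) i0.+1 [seq x.1 + x.2 | x <- zip rest m])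
        else 0
  end.

Definition Psi (n k a b c : nat) : nat := ct n b c a k 0 (nseq n 0).

From mathcomp Require Import all_boot.
From mathcomp Require Import zify.

(* For a = 1 the factor x_1^(-a+1) is 1 and every other factor is a power
   series in x_1, so CT_{x_1} just sets x_1 = 0: the t-factor of x_1
   contributes 1 and each (x_j - x_1)^(-c) leaves x_j^(-c).  This raises the
   exponent of every remaining variable by c, which amounts to replacing a by
   c + 1 in a constant term over one variable fewer.  In [ct] the exponent of the
   current variable only depends on a + c * i0, where i0 counts the variables
   already eliminated. *)

Lemma eq_sum_tuples L B f g :
  f =1 g -> sum_tuples L B f = sum_tuples L B g.
Proof.
elim: L B f g => [|L IH] B f g eq_fg /=; first exact: eq_fg.
by apply: eq_bigr => m _; apply: IH => t; apply: eq_fg.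
Qed.

Lemma sum_tuples0 L f : sum_tuples L 0 f = f (nseq L 0).
Proof. by elim: L f => [|L IH] f //=; rewrite big_nat1 sub0n IH. Qed.

Lemma ct_offset n b c a a' k i0 i0' C :
  a + c * i0 = a' + c * i0' -> ct n b c a k i0 C = ct n b c a' k i0' C.
Proof.
elim: n a a' k i0 i0' C => [//|n IH] a a' k i0 i0' C eq_offset /=.
rewrite eq_offset; apply: eq_bigr => s _; case: ifP => // _.
apply: eq_sum_tuples => t; congr (_ * _); apply: IH.
by rewrite !mulnS; lia.
Qed.

Lemma map_add_zip_nseq0 s :
  [seq x.1 + x.2 | x <- zip s (nseq (size s) 0)] = s.
Proof. by elim: s => //= x s ->; rewrite addn0. Qed.

Lemma ct_first_a1 n b c k :
  ct n.+1 b c 1 k 0 (nseq n.+1 0) = ct n b c 1 k 1 (nseq n 0).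
Proof.
rewrite /= big_nat_recr //= big_nat1 /= muln0 !addn0 andbF addn0.
rewrite subnn sum_tuples0 sumn_nseq mul0n bin0 subn0 mul1n.
rewrite big1_seq => [|m /andP[_ /nseqP[-> _]]]; last exact: bin0.
by rewrite mul1n -[in X in zip _ X](size_nseq n 0) map_add_zip_nseq0.
Qed.

Lemma PsiS_a1 n k b c : Psi n.+1 k 1 b c = Psi n k c.+1 b c.
Proof.
by rewrite /Psi ct_first_a1; apply: ct_offset; rewrite muln1 muln0 addn0 add1n.
Qed.

Theorem lemma5p7 (b n c k : nat) :
  0 < b -> 0 < n -> k <= n ->
  Psi n k 1 b c = Psi n.-1 k c.+1 b c.
Proof. by case: n => [//|n] _ _ _; apply: PsiS_a1. Qed.
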